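(* Let $\boldsymbol{\mathcal{D}} = \begin{pmatrix}\boldsymbol{W}_p\\ \boldsymbol{U}_f \\ \boldsymbol{Y}_f\end{pmatrix}$ be a data matrix with full row rank and LQ decomposition as described in the context. For any $\boldsymbol{a}\in\mathbb{R}^\ell$, let $(\boldsymbol{\xi};\mathbf{u}_f;\mathbf{y}_f) := \boldsymbol{\mathcal{D}}\boldsymbol{a}$ and $\boldsymbol{\gamma}_i:=\boldsymbol{Q}_i\boldsymbol{a}$. Then \begin{align*} \|\boldsymbol{\gamma}_1\|_2^2 &= \|\boldsymbol{\xi}\|_{\left(\boldsymbol{W}_p\boldsymbol{W}_p^\top\right)^{-1}}^2,\\ \|\boldsymbol{\gamma}_2\|_2^2 &= \|\mathbf{u}_f-\boldsymbol{U}_f \boldsymbol{W}_p^+\boldsymbol{\xi}\|_{\boldsymbol{\mathcal{R}}_\text{reg}}^2,\\ \|\boldsymbol{\gamma}_3\|_2^2 &= \|\mathbf{y}_f-\hat{\mathbf{y}}_\text{SPC}(\boldsymbol{\xi}, \mathbf{u}_f)\|_{\boldsymbol{\mathcal{Q}}_\text{reg}}^2, \end{align*} where $\boldsymbol{\mathcal{R}}_\text{reg} :=\left(\boldsymbol{U}_f\left(\boldsymbol{I}-\boldsymbol{W}_p^+\boldsymbol{W}_p\right)\boldsymbol{U}_f^\top\right)^{-1}$, $\boldsymbol{\mathcal{Q}}_\text{reg} :=\left(\boldsymbol{Y}_f (\boldsymbol{I}-\boldsymbol{Z}^+\boldsymbol{Z}) \boldsymbol{Y}_f^\top\right)^{-1}$,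 $\boldsymbol{Z}:=\begin{pmatrix}\boldsymbol{W}_p\\ \boldsymbol{U}_f\end{pmatrix}$ and $\hat{\mathbf{y}}_\text{SPC}(\boldsymbol{\xi},\mathbf{u}_f) := \boldsymbol{Y}_f\boldsymbol{Z}^+\begin{pmatrix}\boldsymbol{\xi}\\ \mathbf{u}_f\end{pmatrix}$. Moreover, $\boldsymbol{\gamma}_4$ does not affect $(\boldsymbol{\xi},\mathbf{u}_f,\mathbf{y}_f)$.
   Context: $\boldsymbol{M}^+$ denotes the Moore–Penrose pseudoinverse and $\|\boldsymbol{x}\|_{\boldsymbol{M}}^2 := \boldsymbol{x}^\top\boldsymbol{M}\boldsymbol{x}$. Data: $m$ inputs, $p$ outputs, past horizon $N_p$, future horizon $N_f$, $L=N_p+N_f$, and $\ell$ data trajectories. The data matrix $\boldsymbol{\mathcal{D}}\in\mathbb{R}^{L(m+p)\times\ell}$ has blocks $\boldsymbol{W}_p\in\mathbb{R}^{N_p(m+p)\times\ell}$, $\boldsymbol{U}_f\in\mathbb{R}^{mN_f\times \ell}$, $\boldsymbol{Y}_f\in\mathbb{R}^{pN_f\times\ell}$ and is assumed to have full row rank. Its LQ decomposition is $\boldsymbol{\mathcal{D}} = \begin{pmatrix} \boldsymbol{L}_{11} & \boldsymbol{0} & \boldsymbol{0} & \boldsymbol{0} \\ \boldsymbol{L}_{21} & \boldsymbol{L}_{22} & \boldsymbol{0} & \boldsymbol{0} \\ \boldsymbol{L}_{31} & \boldsymbol{L}_{32} & \boldsymbol{L}_{33} & \boldsymbol{0} \end{pmatrix}\begin{pmatrix}\boldsymbol{Q}_1\\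 \boldsymbol{Q}_2\\ \boldsymbol{Q}_3\\ \boldsymbol{Q}_4\end{pmatrix}$, with non-singular square diagonal blocks $\boldsymbol{L}_{11},\boldsymbol{L}_{22},\boldsymbol{L}_{33}$ (of sizes matching $\boldsymbol{W}_p,\boldsymbol{U}_f,\boldsymbol{Y}_f$) and $\boldsymbol{Q}=\begin{pmatrix}\boldsymbol{Q}_1^\top & \boldsymbol{Q}_2^\top&\boldsymbol{Q}_3^\top&\boldsymbol{Q}_4^\top\end{pmatrix}^\top\in\mathbb{R}^{\ell\times\ell}$ orthogonal (so $\boldsymbol{Q}_i\boldsymbol{Q}_i^\top=\boldsymbol{I}$ and $\boldsymbol{Q}_i\boldsymbol{Q}_j^\top=\boldsymbol{0}$ for $i\ne j$). *)

From HB Require Import structures.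
From mathcomp Require Import all_boot all_order all_algebra.
Set Implicit Arguments. Unset Strict Implicit. Unset Printing Implicit Defensive.
Import Order.TTheory GRing.Theory Num.Theory.
Local Open Scope ring_scope.

(* X is the Moore--Penrose pseudoinverse of A: the four Penrose conditions
   (which characterize it uniquely). *)
Definition is_MP_pinv (R : realFieldType) (r c : nat)
    (A : 'M[R]_(r, c)) (X : 'M[R]_(c, r)) : Prop :=
  [/\ A *m X *m A = A, X *m A *m X = X,
      (A *m X)^T = A *m X & (X *m A)^T = X *m A].

Definition sqnorm (R : realFieldType) (n : nat) (x : 'cV[R]_n) : R :=
  \sum_(i < n) x i 0 ^+ 2.

Definition wsqnorm (R : realFieldType) (n : nat) (M : 'M[R]_n) (x : 'cV[R]_n) : R :=
  (x^T *m M *m x) 0 0.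

From HB Require Import structures.
From mathcomp Require Import all_boot all_order all_algebra.
Import Order.TTheory GRing.Theory Num.Theory.
Local Open Scope ring_scope.

(* If N = L Q with L invertible and Q having orthonormal rows, every
   Moore-Penrose pseudoinverse X of N satisfies X N = Q^T Q, the orthogonal
   projector onto the row space of Q.  Hence when M = A Q + L' Q' with Q' also
   orthonormal and orthogonal to Q, the residual M (I - X N) is L' Q', so the
   residual Gram matrix is L' L'^T and the weighted norm of the residual of
   M a is exactly the Euclidean norm of Q' a.  The first identity is the case
   W_p = L11 Q1 without projection; the other two take (N, M) = (W_p, U_f) and
   (Z, Y_f), where Z = [L11 0; L21 L22] [Q1; Q2]. *)

Section LQNorms.

Set Implicit Arguments.
Unset Strict Implicit.

Variable R : realFieldType.

Lemma sqnormE (n : nat) (v : 'cV[R]_n) : sqnorm v = (v^T *m v) 0 0.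
Proof. by rewrite /sqnorm mxE; apply: eq_bigr => i _; rewrite !mxE expr2. Qed.

Lemma col_mx_orthonormal (n1 n2 l : nat) (A : 'M[R]_(n1, l)) (B : 'M[R]_(n2, l)) :
  col_mx A B *m (col_mx A B)^T = 1%:M <->
  [/\ A *m A^T = 1%:M, B *m A^T = 0 & B *m B^T = 1%:M].
Proof.
have trB0 : B *m A^T = 0 -> A *m B^T = 0.
  by move=> BA; rewrite -[A]trmxK -trmx_mul BA trmx0.
rewrite tr_col_mx mul_col_row scalar_mx_block; split.
  by move=> /eq_block_mx [-> _ -> ->].
by move=> [-> BA ->]; rewrite BA trB0.
Qed.

Lemma wsqnorm_gram_inv (n l : nat) (L : 'M[R]_n) (Q : 'M[R]_(n, l)) (a : 'cV[R]_l) :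
  L \in unitmx -> Q *m Q^T = 1%:M ->
  wsqnorm (invmx (L *m Q *m (L *m Q)^T)) (L *m Q *m a) = sqnorm (Q *m a).
Proof.
move=> uL QQ; have uLT : L^T \in unitmx by rewrite unitmx_tr.
have -> : L *m Q *m (L *m Q)^T = L *m L^T.
  by rewrite trmx_mul mulmxA -(mulmxA L) QQ mulmx1.
have invLLT_L : invmx (L *m L^T) *m L = invmx L^T.
  have uLLT : L *m L^T \in unitmx by rewrite unitmx_mul uL.
  by rewrite -[X in _ *m X = _](mulmxK uLT L) mulKmx.
rewrite sqnormE /wsqnorm -(mulmxA L) !trmx_mul -!mulmxA (mulmxA _ L) invLLT_L.
by rewrite (mulmxA L^T) mulmxV // mul1mx.
Qed.

Lemma pinv_mulmx_lq (n l : nat) (N : 'M[R]_(n, l)) (X : 'M[R]_(l, n))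
    (L : 'M[R]_n) (Q : 'M[R]_(n, l)) :
  N = L *m Q -> L \in unitmx -> Q *m Q^T = 1%:M -> is_MP_pinv N X ->
  X *m N = Q^T *m Q.
Proof.
move=> eN uL QQ [NXN _ _ XN_sym].
have QXNQ : Q *m (X *m N) = Q.
  by have := congr1 (mulmx (invmx L)) NXN; rewrite eN !mulmxA mulVmx // !mul1mx.
have XN_QT : X *m N = Q^T *m (X *m L)^T by rewrite -XN_sym eN mulmxA trmx_mul.
by rewrite -{2}QXNQ XN_QT (mulmxA Q) QQ mul1mx.
Qed.

Lemma mul_compl_proj (n n1 n2 l : nat) (M : 'M[R]_(n, l))
    (A : 'M[R]_(n, n1)) (B : 'M[R]_(n, n2)) (Q : 'M[R]_(n1, l)) (Q' : 'M[R]_(n2, l)) :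
  M = A *m Q + B *m Q' -> Q *m Q^T = 1%:M -> Q' *m Q^T = 0 ->
  M *m (1%:M - Q^T *m Q) = B *m Q'.
Proof.
move=> eM QQ Q'Q.
have MQT : M *m Q^T = A by rewrite eM mulmxDl -!mulmxA QQ Q'Q mulmx1 mulmx0 addr0.
by rewrite mulmxBr mulmx1 mulmxA MQT {1}eM addrAC subrr add0r.
Qed.

(* I - Q^T Q is a symmetric idempotent, so it factors as (I - Q^T Q)(I - Q^T Q)^T. *)
Lemma gram_compl_proj (n m l : nat) (M : 'M[R]_(m, l)) (Q : 'M[R]_(n, l)) :
  Q *m Q^T = 1%:M ->
  M *m (1%:M - Q^T *m Q) *m M^T
    = M *m (1%:M - Q^T *m Q) *m (M *m (1%:M - Q^T *m Q))^T.
Proof.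
move=> QQ; have idem : (1%:M - Q^T *m Q) *m (1%:M - Q^T *m Q)^T = 1%:M - Q^T *m Q.
  rewrite linearB /= trmx1 trmx_mul trmxK mulmxBr mulmx1 mulmxBl mul1mx.
  by rewrite mulmxA -(mulmxA Q^T) QQ mulmx1 subrr subr0.
by rewrite [in RHS]trmx_mul mulmxA -[in RHS](mulmxA M) idem.
Qed.

Lemma wsqnorm_pinv_residual (n r l : nat) (N : 'M[R]_(n, l)) (X : 'M[R]_(l, n))
    (LN : 'M[R]_n) (QN : 'M[R]_(n, l)) (M : 'M[R]_(r, l)) (A : 'M[R]_(r, n))
    (L : 'M[R]_r) (Q : 'M[R]_(r, l)) (a : 'cV[R]_l) :
  N = LN *m QN -> LN \in unitmx -> QN *m QN^T = 1%:M -> is_MP_pinv N X ->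
  M = A *m QN + L *m Q -> L \in unitmx -> Q *m Q^T = 1%:M -> Q *m QN^T = 0 ->
  wsqnorm (invmx (M *m (1%:M - X *m N) *m M^T)) (M *m a - M *m X *m (N *m a))
    = sqnorm (Q *m a).
Proof.
move=> eN uLN QNQN pinvX eM uL QQ QQN.
have residual : M *m a - M *m X *m (N *m a) = M *m (1%:M - X *m N) *m a.
  by rewrite mulmxBr mulmx1 mulmxBl !mulmxA.
rewrite residual (pinv_mulmx_lq eN uLN QNQN pinvX) gram_compl_proj //.
by rewrite (mul_compl_proj eM QNQN QQN) wsqnorm_gram_inv.
Qed.

End LQNorms.

Theorem corollary1 (R : realFieldType) (m p Np Nf l k : nat)
  (Wp : 'M[R]_(Np * (m + p), l)) (Uf : 'M[R]_(m * Nf, l)) (Yf : 'M[R]_(p * Nf, l))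
  (L11 : 'M[R]_(Np * (m + p)))
  (L21 : 'M[R]_(m * Nf, Np * (m + p))) (L22 : 'M[R]_(m * Nf))
  (L31 : 'M[R]_(p * Nf, Np * (m + p))) (L32 : 'M[R]_(p * Nf, m * Nf))
  (L33 : 'M[R]_(p * Nf))
  (Q1 : 'M[R]_(Np * (m + p), l)) (Q2 : 'M[R]_(m * Nf, l))
  (Q3 : 'M[R]_(p * Nf, l)) (Q4 : 'M[R]_(k, l))
  (Wpp : 'M[R]_(l, Np * (m + p)))
  (Zp : 'M[R]_(l, Np * (m + p) + m * Nf)) :
  (* full row rank of the data matrix *)
  row_free (col_mx Wp (col_mx Uf Yf)) ->
  (* LQ decomposition *)
  Wp = L11 *m Q1 ->
  Uf = L21 *m Q1 + L22 *m Q2 ->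
  Yf = L31 *m Q1 + L32 *m Q2 + L33 *m Q3 ->
  L11 \in unitmx -> L22 \in unitmx -> L33 \in unitmx ->
  (* Q is an l x l orthogonal matrix *)
  (Np * (m + p) + (m * Nf + (p * Nf + k)))%N = l ->
  (let Q := col_mx Q1 (col_mx Q2 (col_mx Q3 Q4)) in Q *m Q^T = 1%:M) ->
  (* Moore--Penrose pseudoinverses of W_p and Z *)
  is_MP_pinv Wp Wpp ->
  is_MP_pinv (col_mx Wp Uf) Zp ->
  forall a : 'cV[R]_l,
    let xi := Wp *m a in
    let uf := Uf *m a in
    let yf := Yf *m a in
    let Z := col_mx Wp Uf in
    let Rreg := invmx (Uf *m (1%:M - Wpp *m Wp) *m Uf^T) in
    let Qreg := invmx (Yf *m (1%:M - Zp *m Z) *m Yf^T) in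
    let yspc := Yf *m Zp *m col_mx xi uf in
    [/\ sqnorm (Q1 *m a) = wsqnorm (invmx (Wp *m Wp^T)) xi,
        sqnorm (Q2 *m a) = wsqnorm Rreg (uf - Uf *m Wpp *m xi),
        sqnorm (Q3 *m a) = wsqnorm Qreg (yf - yspc) &
        (* gamma_4 does not affect (xi, uf, yf) *)
        forall a' : 'cV[R]_l,
          Q1 *m a' = Q1 *m a -> Q2 *m a' = Q2 *m a -> Q3 *m a' = Q3 *m a ->
          [/\ Wp *m a' = xi, Uf *m a' = uf & Yf *m a' = yf]].
Proof.
move=> _ eW eU eY uL11 uL22 uL33 _ /= /col_mx_orthonormal[Q1Q1 Q234Q1].
move=> /col_mx_orthonormal[Q2Q2 Q34Q2 /col_mx_orthonormal[Q3Q3 _ _]] pinvW pinvZ a.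
move: Q234Q1 Q34Q2; rewrite !mul_col_mx -!col_mx0.
move=> /eq_col_mx[Q2Q1 /eq_col_mx[Q3Q1 _]] /eq_col_mx[Q3Q2 _].
pose Q12 := col_mx Q1 Q2.
have Q12Q12 : Q12 *m Q12^T = 1%:M by apply/col_mx_orthonormal.
have Q3Q12 : Q3 *m Q12^T = 0 by rewrite tr_col_mx mul_mx_row Q3Q1 Q3Q2 row_mx0.
have eZ : col_mx Wp Uf = block_mx L11 0 L21 L22 *m Q12.
  by rewrite mul_block_col mul0mx addr0 -eW -eU.
have uLZ : block_mx L11 0 L21 L22 \in unitmx.
  by rewrite unitmxE det_lblock unitrM -!unitmxE uL11 uL22.
have eY12 : Yf = row_mx L31 L32 *m Q12 + L33 *m Q3 by rewrite mul_row_col.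
split.
- by rewrite eW wsqnorm_gram_inv.
- by rewrite (wsqnorm_pinv_residual a eW uL11 Q1Q1 pinvW eU uL22 Q2Q2 Q2Q1).
- by rewrite -mul_col_mx (wsqnorm_pinv_residual a eZ uLZ Q12Q12 pinvZ eY12 uL33 Q3Q3 Q3Q12).
- move=> a' eQ1 eQ2 eQ3.
  by rewrite eY eU eW !mulmxDl -!mulmxA eQ1 eQ2 eQ3.
Qed.
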